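(* Let $B$ be any group and $p\ge 2$ an integer, and let $\sigma=(1,2,\dots,p)$. Let $r_1,\dots,r_{p-1},f,g\in B$ and let $$w=(r_1,r_2,\dots,r_{p-1},\ r_1^{-1}\cdots r_{p-1}^{-1}[f,g])\in B\wr C_p.$$ Define elements of $B$ by $a_{1,i}=e$ for $1\le i\le p-1$, $a_{2,1}=(f^{-1})^{r_1^{-1}\cdots r_{p-1}^{-1}}$, $a_{2,i}=r_{i-1}a_{2,i-1}$ for $2\le i\le p$, and $a_{1,p}=g^{a_{2,p}^{-1}}$. Then $$w=\big[(a_{1,1},\dots,a_{1,p})\sigma,\ (a_{2,1},\dots,a_{2,p})\big].$$
   Context: $B\wr C_p=B^p\rtimes C_p$ with $C_p=\langle\sigma\rangle$ acting on $\{1,\dots,p\}$; elements are written $(g_1,\dots,g_p)\pi$ with multiplication $(g_1,\dots,g_p)\pi\cdot(h_1,\dots,h_p)\tau=(g_1h_{\pi(1)},\dots,g_ph_{\pi(p)})\pi\tau$. Conventions: $[a,b]=aba^{-1}b^{-1}$ and $a^b=bab^{-1}$. *)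

From HB Require Import structures.
From mathcomp Require Import all_boot all_fingroup.
Set Implicit Arguments. Unset Strict Implicit. Unset Printing Implicit Defensive.

Local Open Scope group_scope.

Section Wreath.
Variable B : groupType.

(* Paper conventions: [a,b] = a b a^-1 b^-1 and a^b = b a b^-1. *)
Definition pcomm (a b : B) : B := a * b * a^-1 * b^-1.
Definition pconj (a b : B) : B := b * a * b^-1.

Variable p : nat.

(* Elements (g_1,...,g_p) pi of B wr S_p; index i : 'I_p stands for i+1. *)
Definition wr := ({ffun 'I_p -> B} * {perm 'I_p})%type.

(* (g)pi * (h)tau = (g_i h_{pi(i)}) pi tau, where (pi tau)(i) = tau(pi(i)),
   which is mathcomp's composition of permutations (permM). *)
Definition wmul (x y : wr) : wr :=
  ([ffun i => x.1 i * y.1 (x.2 i)], (x.2 * y.2)%g).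

Definition winv (x : wr) : wr :=
  ([ffun j => (x.1 ((x.2)^-1 j))^-1], (x.2)^-1%g).

Definition wcomm (x y : wr) : wr := wmul (wmul x y) (wmul (winv x) (winv y)).

Definition wbase (g : 'I_p -> B) : wr := ([ffun i => g i], 1%g).

End Wreath.

Lemma ordS_inj p : injective (@ordS p).
Proof. exact: (can_inj (@ordSK p)). Qed.
Definition sigma_cyc p : {perm 'I_p} := perm (@ordS_inj p).

From mathcomp Require Import all_boot all_fingroup.

(** Against the [p]-cycle with [a_i = 1] off the last coordinate, the
    commutator with a base element [(b)] has entries [b_(i+1) b_i^-1], so [b]
    must be the partial products of the [r_i]; the single remaining entry
    [a_p b_1 a_p^-1 b_p^-1] is a group identity equal to [R [f, g]] for the
    given [b_1] and [a_p]. *)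

Lemma wcomm_base {B : groupType} (p : nat) (a : {ffun 'I_p -> B})
    (s : {perm 'I_p}) (b : 'I_p -> B) :
  wcomm (a, s) (wbase b) = wbase (fun i => pconj (b (s i)) (a i) * (b i)^-1)%g.
Proof.
rewrite /wcomm /wmul /winv /wbase /=; congr pair; last by rewrite invg1 !mulg1 mulgV.
by apply/ffunP => i; rewrite !ffunE mulg1 permK invg1 perm1 /pconj !mulgA.
Qed.

Lemma sigma_cyc_val (p : nat) (i : 'I_p) : sigma_cyc p i = i.+1 %% p :> nat.
Proof. by rewrite permE. Qed.

Lemma prod_recurrence {B : groupType} {r a : nat -> B} {n : nat} :
  (forall i, 2 <= i <= n -> a i = (r i.-1 * a i.-1)%g) -> 1 <= n ->
  a n = ((\big[mul/1]_(1 <= i < n) (r i)^-1)^-1 * a 1%N)%g.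
Proof.
elim: n => [//|[|n] IH] rec _; first by rewrite big_geq // invg1 mul1g.
rewrite rec //= IH // => [|i /andP[i_ge2 i_le]]; last by rewrite rec // i_ge2 ltnW.
by rewrite [in RHS]big_nat_recr //= invMg invgK mulgA.
Qed.

Lemma pcomm_from_conjugates {B : groupType} (R f g : B) :
  (pconj (pconj f^-1 R) (pconj g (R * f)) * (R * f) = R * pcomm f g)%g.
Proof. by rewrite /pconj /pcomm !invMg !invgK !mulgA !mulgKV. Qed.

Theorem lemma3 (B : groupType) (p : nat) (hp : 2 <= p)
  (r : nat -> B) (f g : B) (a1 a2 : nat -> B) :
  let R := (\big[mul/1]_(1 <= i < p) (r i)^-1)%g in
  (forall i, 1 <= i <= p.-1 -> a1 i = 1%g) ->
  a2 1 = pconj (f^-1)%g R ->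
  (forall i, 2 <= i <= p -> a2 i = (r i.-1 * a2 i.-1)%g) ->
  a1 p = pconj g (a2 p)^-1%g ->
  wbase (fun i : 'I_p => if i.+1 < p then r i.+1 else (R * pcomm f g)%g)
  = wcomm (([ffun i : 'I_p => a1 i.+1], sigma_cyc p) : wr B p)
          (wbase (fun i : 'I_p => a2 i.+1)).
Proof.
move=> R a1_1 a2_1 a2_rec a1_p.
have a2_p : a2 p = (R * f)^-1%g.
  by rewrite (prod_recurrence a2_rec (ltnW hp)) a2_1 /pconj -/R invMg !mulgA mulVg mul1g.
rewrite wcomm_base /wbase; congr pair; apply/ffunP => i; rewrite !ffunE sigma_cyc_val.
case: ifP => [i_lt | /negbT i_last].
  rewrite modn_small // a1_1 ?ltn_predRL // a2_rec //=.
  by rewrite /pconj invg1 mulg1 mul1g mulgK.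
have i_p : i.+1 = p by apply/eqP; rewrite eqn_leq ltn_ord leqNgt.
by rewrite i_p modnn a1_p a2_p invgK a2_1 pcomm_from_conjugates.
Qed.
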